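(* Let $r\geq 2$, let $\mathcal{G}$ and $\mathcal{H}$ be $r$-uniform hypergraphs with $u\in V(\mathcal{G})$ and $v\in V(\mathcal{H})$, and let $m$ be a positive integer. Then $\varphi\big((\mathcal{G}_u\cdot m\mathcal{H}_v)\cup(m-1)\mathcal{G},x\big)=\varphi\big((\mathcal{H}_v\cdot m\mathcal{G}_u)\cup(m-1)\mathcal{H},x\big)$.
   Context: For an $r$-uniform hypergraph $\mathcal{K}$ on $n$ vertices, $m(\mathcal{K},k)$ is the number of sets of $k$ pairwise disjoint edges ($m(\mathcal{K},0)=1$) and $\varphi(\mathcal{K},x)=\sum_{k\geq0}(-1)^km(\mathcal{K},k)x^{n-kr}$ is the matching polynomial. $\cup$ denotes disjoint union and $k\mathcal{G}$ the disjoint union of $k$ copies of $\mathcal{G}$ ($0\mathcal{G}$ is empty). $\mathcal{G}_u\cdot m\mathcal{H}_v$ is the hypergraph obtained from $\mathcal{G}$ and $m$ disjoint copies of $\mathcal{H}$ by adding $m$ new edges $e_1,\dots,e_m$, where $e_i=\{v_{i,1},\dots,v_{i,r}\}$, $v_{i,1}$ is identified with $u$, $v_{i,r}$ is identified with the vertex $v$ of the $i$-th copy of $\mathcal{H}$, and $v_{i,2},\dots,v_{i,r-1}$ are new vertices (all distinct). $\mathcal{H}_v\cdot m\mathcal{G}_u$ is defined analogously with the roles of $(\mathcal{G},u)$ and $(\mathcal{H},v)$ exchanged. *)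

From mathcomp Require Import all_boot all_order all_algebra.
Set Implicit Arguments. Unset Strict Implicit. Unset Printing Implicit Defensive.
Import GRing.Theory.
Local Open Scope ring_scope.

Definition uniform (V : finType) (r : nat) (E : {set {set V}}) : Prop :=
  forall e, e \in E -> #|e| = r.

Definition is_matching (V : finType) (E M : {set {set V}}) : bool :=
  (M \subset E) &&
  [forall e1 in M, forall e2 in M, (e1 != e2) ==> [disjoint e1 & e2]].

Definition nmatch (V : finType) (E : {set {set V}}) (k : nat) : nat :=
  #|[set M : {set {set V}} | is_matching E M & #|M| == k]|.

(* phi(K,x) = sum_k (-1)^k m(K,k) x^(n - k r), n = #|V|.  For an r-uniform K
   with r >= 1, m(K,k) = 0 whenever k r > n, so summing k <= n suffices. *)
Definition matchpoly (V : finType) (r : nat) (E : {set {set V}}) : {poly int} :=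
  \sum_(k < #|V|.+1) ((-1) ^+ k *+ nmatch E k) *: 'X^(#|V| - k * r).

Definition hunion (V1 V2 : finType) (E1 : {set {set V1}}) (E2 : {set {set V2}})
  : {set {set (V1 + V2)%type}} :=
  [set (@inl V1 V2) @: e | e : {set V1} in E1] :|: [set (@inr V1 V2) @: e | e : {set V2} in E2].

Definition hcopies (k : nat) (V : finType) (E : {set {set V}})
  : {set {set ('I_k * V)%type}} :=
  \bigcup_(i < k) [set (pair i) @: e | e : {set V} in E].

(* G_u . m H_v : vertices = V(G) + m copies of V(H) + m*(r-2) new vertices;
   edges = edges of G, of each copy of H, and the m new edges
   e_i = {u, v_i} U {new vertices (i, j), j < r-2}. *)
Definition attach (r m : nat) (VG VH : finType) (EG : {set {set VG}}) (u : VG)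
  (EH : {set {set VH}}) (v : VH)
  : {set {set ((VG + ('I_m * VH)) + ('I_m * 'I_(r - 2)))%type}} :=
  [set inl @: e | e : {set (VG + ('I_m * VH))%type} in hunion EG (hcopies m EH)] :|:
  [set ([set inl (inl u)] :|: [set inl (inr (i, v))]
         :|: [set inr (i, j) | j : 'I_(r - 2)]) | i : 'I_m].

From mathcomp Require Import all_boot all_order all_algebra.
From mathcomp Require Import ring zify.
Set Implicit Arguments. Unset Strict Implicit. Unset Printing Implicit Defensive.
Import GRing.Theory Num.Theory.

(* The matching polynomial of a hypergraph on n vertices is determined by n and
   by its matching generating function gf(K) = sum_M X^|M|, M ranging over the
   matchings of K.  gf is multiplicative over disjoint unions, and splitting the
   matchings of G_u . m H_v according to the pendant edge they use (at most one,
   since all pendant edges contain u) gives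
     gf(G_u . m H_v) = gf(G) gf(H)^m + m X gf(G - u) gf(H - v) gf(H)^(m-1).
   After multiplication by gf(G)^(m-1) this is symmetric in (G, u) and (H, v),
   and both hypergraphs of the theorem have m (|V(G)| + |V(H)| + r - 2) vertices. *)

Local Open Scope ring_scope.

Definition matching_gf (V : finType) (E : {set {set V}}) : {poly int} :=
  \sum_(M | is_matching E M) 'X^#|M|.

(* E - X, the vertices of X being kept as isolated vertices. *)
Definition hdelete (V : finType) (E : {set {set V}}) (X : {set V}) : {set {set V}} :=
  [set e in E | [disjoint e & X]].

Lemma is_matchingE (V : finType) (E M : {set {set V}}) :
  is_matching E M = (M \subset E) && trivIset M.
Proof.
congr (_ && _); apply/forall_inP/trivIsetP => [H e1 e2 e1M e2M | H e1 e1M].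
  by have /forall_inP/(_ e2 e2M)/implyP := H e1 e1M.
by apply/forall_inP => e2 e2M; apply/implyP; apply: H.
Qed.

Lemma matching0 (V : finType) (E : {set {set V}}) : is_matching E set0.
Proof. by rewrite is_matchingE sub0set (trivIsetS (sub0set _) (trivIset1 set0)). Qed.

Lemma coef_matching_gf (V : finType) (E : {set {set V}}) k :
  (matching_gf E)`_k = (nmatch E k)%:R.
Proof.
rewrite /matching_gf /nmatch coef_sum -sum1_card natr_sum big_mkcond [RHS]big_mkcond /=.
by apply: eq_bigr => M _; rewrite coefXn inE eq_sym; case: is_matching; case: (_ == _).
Qed.

Lemma matchpoly_eq (r : nat) (V1 V2 : finType) (E1 : {set {set V1}}) (E2 : {set {set V2}}) :
  #|V1| = #|V2| -> matching_gf E1 = matching_gf E2 -> matchpoly r E1 = matchpoly r E2.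
Proof.
move=> eqV eq_gf; rewrite /matchpoly eqV; apply: eq_bigr => k _.
have /eqP : (nmatch E1 k)%:R = (nmatch E2 k)%:R :> int by rewrite -!coef_matching_gf eq_gf.
by rewrite eqr_nat => /eqP ->.
Qed.

Lemma matching_gf_imset (V W : finType) (f : V -> W) (E : {set {set V}}) :
  injective f -> matching_gf [set f @: e | e : {set V} in E] = matching_gf E.
Proof.
move=> f_inj; pose g (e : {set V}) := f @: e.
have g_inj : injective g := imset_inj f_inj.
rewrite /matching_gf.
rewrite (reindex_onto (fun M : {set {set V}} => g @: M) (fun M' => g @^-1: M')) /=; last first.
  move=> M' /andP[sub _]; apply/setP => e'; apply/imsetP/idP => [[e]|e'M'].
    by rewrite inE => eM ->.
  by have /imsetP[e _ eq_e'] := subsetP sub e' e'M'; exists e; rewrite // inE /g -eq_e'.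
apply: eq_big => [M|M _]; last by rewrite card_imset.
have -> : g @^-1: (g @: M) = M by apply/setP => e; rewrite inE mem_imset.
rewrite eqxx andbT !is_matchingE imset_trivIset //; congr (_ && _).
apply/idP/idP => [sub|]; last exact: imsetS.
by apply/subsetP => e eM; rewrite -(mem_imset _ _ g_inj) (subsetP sub) ?imset_f.
Qed.

Lemma trivIsetU_disjoint (V : finType) (S T : {set {set V}}) :
  S :&: T = set0 ->
  trivIset (S :|: T) = [&& trivIset S, trivIset T & [disjoint cover S & cover T]].
Proof.
move=> ST0; apply/idP/and3P => [trivST | [trivS trivT disjST]]; last first.
  by rewrite setUC trivIsetU // disjoint_sym.
split; [exact: trivIsetS (subsetUl _ _) trivST | exact: trivIsetS (subsetUr _ _) trivST |].
apply/bigcup_disjointP => t tT; rewrite disjoint_sym; apply/bigcup_disjointP => s sS.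
apply: (trivIsetP trivST); rewrite ?inE ?sS ?tT ?orbT //.
by apply/eqP => ts; move/setP/(_ s): ST0; rewrite !inE sS -ts tT.
Qed.

Lemma subset_hdelete (V : finType) (A T : {set {set V}}) (X : {set V}) :
  (T \subset hdelete A X) = (T \subset A) && [disjoint cover T & X].
Proof.
apply/subsetP/andP => [sub | [/subsetP sub disj] t tT]; last first.
  move: disj; rewrite inE sub //= disjoint_sym => /bigcup_disjointP/(_ t tT).
  by rewrite disjoint_sym.
split; first by apply/subsetP => t /sub; rewrite inE => /andP[].
by rewrite disjoint_sym; apply/bigcup_disjointP => t /sub; rewrite inE disjoint_sym => /andP[].
Qed.

Lemma hdelete_set0 (V : finType) (E : {set {set V}}) : hdelete E set0 = E.
Proof. by apply/setP => e; rewrite inE -setI_eq0 setI0 eqxx andbT. Qed.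

Section Conditioning.
Variables (V : finType) (A N : {set {set V}}).
Hypothesis AN0 : A :&: N = set0.

Lemma setI_split_disjoint (M : {set {set V}}) : (M :&: N) :&: (M :&: A) = set0.
Proof. by rewrite setIACA setIid (setIC N) AN0 setI0. Qed.

Lemma setI_splitU (M : {set {set V}}) :
  M \subset A :|: N -> (M :&: N) :|: (M :&: A) = M.
Proof. by rewrite -setIUr setUC => /setIidPl. Qed.

Lemma is_matching_setU (M : {set {set V}}) :
  is_matching (A :|: N) M =
  [&& M \subset A :|: N, is_matching N (M :&: N)
    & is_matching (hdelete A (cover (M :&: N))) (M :&: A)].
Proof.
rewrite !is_matchingE subset_hdelete !subsetIr /=.
case/boolP: (M \subset A :|: N) => //= /setI_splitU {1}<-.
rewrite trivIsetU_disjoint ?setI_split_disjoint // disjoint_sym.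
by congr (_ && _); apply: andbC.
Qed.

Lemma matching_gf_setU :
  matching_gf (A :|: N) =
  \sum_(S | is_matching N S) 'X^#|S| * matching_gf (hdelete A (cover S)).
Proof.
rewrite /matching_gf; under [RHS]eq_bigr do rewrite big_distrr /=.
rewrite pair_big_dep /=.
rewrite (reindex_onto (fun M => (M :&: N, M :&: A)) (fun p => p.1 :|: p.2)) /=; last first.
  move=> [S T] /andP[]; rewrite !is_matchingE subset_hdelete /=.
  move=> /andP[SN _] /andP[/andP[TA _] _].
  have TN0 : T :&: N = set0 by apply/eqP; rewrite -subset0 -AN0 setSI.
  have SA0 : S :&: A = set0 by apply/eqP; rewrite -subset0 -AN0 setIC setIS.
  by rewrite !setIUl TN0 SA0 setU0 set0U (setIidPl SN) (setIidPl TA).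
apply: eq_big => [M | M].
  by rewrite is_matching_setU -setIUr setUC [RHS]andbC; congr (_ && _); apply/setIidPl/eqP.
rewrite is_matching_setU => /and3P[sub _ _]; rewrite -{1}(setI_splitU sub).
by rewrite -exprD -cardsUI setI_split_disjoint cards0 addn0.
Qed.

End Conditioning.

Lemma matching_gf0 (V : finType) : matching_gf (set0 : {set {set V}}) = 1.
Proof.
rewrite /matching_gf (big_pred1 set0) ?cards0 // => M.
by apply/idP/eqP => [|->]; [rewrite is_matchingE subset0 => /andP[/eqP] | exact: matching0].
Qed.

Lemma matching_gf_mulU (V : finType) (A N : {set {set V}}) :
  set0 \notin A -> {in A & N, forall a e : {set V}, [disjoint a & e]} ->
  matching_gf (A :|: N) = matching_gf A * matching_gf N.
Proof.
move=> A0 disjAN.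
have AN0 : A :&: N = set0.
  apply/setP => e; rewrite !inE; apply/andP => -[eA eN].
  by move: (disjAN e e eA eN); rewrite -setI_eq0 setIid => /eqP e0; rewrite -e0 eA in A0.
rewrite matching_gf_setU // mulrC [matching_gf N]/matching_gf big_distrl /=.
apply: eq_bigr => S; rewrite is_matchingE => /andP[SN _]; congr (_ * _).
congr matching_gf; apply/setP => a; rewrite inE andb_idr // => aA.
by apply/bigcup_disjointP => e eS; rewrite disjAN // (subsetP SN).
Qed.

Lemma intersecting_matching (V : finType) (N S : {set {set V}}) :
  {in N &, forall e f : {set V}, ~~ [disjoint e & f]} ->
  is_matching N S = (S == set0) || (S \in [set [set e] | e in N]).
Proof.
move=> intN; apply/idP/idP => [|/orP[/eqP-> | /imsetP[e eN ->]]]; last 2 first.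
- exact: matching0.
- by rewrite is_matchingE sub1set eN trivIset1.
rewrite is_matchingE => /andP[/subsetP SN trivS].
have [->|[e eS]] := set_0Vmem S; first by rewrite eqxx.
apply/orP; right; apply/imsetP; exists e; first exact: SN.
apply/eqP; rewrite eqEsubset sub1set eS andbT; apply/subsetP => f fS; rewrite inE.
apply: contraT => fe; have := trivIsetP trivS f e fS eS fe.
by rewrite (negbTE (intN f e _ _)) ?SN.
Qed.

Lemma matching_gf_star (V : finType) (A N : {set {set V}}) :
  A :&: N = set0 -> {in N &, forall e f : {set V}, ~~ [disjoint e & f]} ->
  matching_gf (A :|: N) = matching_gf A + \sum_(e in N) 'X * matching_gf (hdelete A e).
Proof.
move=> AN0 intN; rewrite matching_gf_setU // (bigD1 set0) ?matching0 //=.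
rewrite cards0 mul1r /cover big_set0 hdelete_set0; congr (_ + _).
rewrite (eq_bigl (mem [set [set e] | e in N])) => [|S]; last first.
  rewrite intersecting_matching // andb_orl andbN /= andb_idr // => /imsetP[e _ ->].
  by apply/set0Pn; exists e; exact: set11.
rewrite big_imset /= => [|e f _ _]; last exact: set1_inj.
by apply: eq_bigr => e _; rewrite cards1 expr1 big_set1.
Qed.

Lemma matching_gf_bigcup (V I : finType) (F : I -> {set {set V}}) :
  (forall i, set0 \notin F i) ->
  (forall i j, i != j -> {in F i & F j, forall e f : {set V}, [disjoint e & f]}) ->
  matching_gf (\bigcup_i F i) = \prod_i matching_gf (F i).
Proof.
move=> F0 disjF; elim: (index_enum I) (index_enum_uniq I) => [|i s IHs] /=.
  by rewrite !big_nil matching_gf0.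
case/andP => i_s uniq_s; rewrite !big_cons matching_gf_mulU ?IHs // => e f eFi.
rewrite bigcup_seq => /bigcupP[j js fFj]; apply: disjF eFi fFj.
by apply: contraNneq i_s => ->.
Qed.

Definition hfamily (k : nat) (V : finType) (F : 'I_k -> {set {set V}})
  : {set {set ('I_k * V)%type}} :=
  \bigcup_(i < k) [set pair i @: e | e : {set V} in F i].

Lemma notin_set0_imset (V W : finType) (f : V -> W) (E : {set {set V}}) :
  set0 \notin E -> set0 \notin [set f @: e | e : {set V} in E].
Proof. by apply: contra => /imsetP[e eE /esym/eqP]; rewrite imset_eq0 => /eqP <-. Qed.

Lemma notin_set0_hfamily (k : nat) (V : finType) (F : 'I_k -> {set {set V}}) :
  (forall i, set0 \notin F i) -> set0 \notin hfamily F.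
Proof. by move=> F0; apply/bigcupP => -[i _]; apply/negP/notin_set0_imset. Qed.

Lemma notin_set0_hdelete (V : finType) (E : {set {set V}}) (X : {set V}) :
  set0 \notin E -> set0 \notin hdelete E X.
Proof. by rewrite inE negb_and => ->. Qed.

Lemma matching_gf_hunion (V1 V2 : finType) (E1 : {set {set V1}}) (E2 : {set {set V2}}) :
  set0 \notin E2 -> matching_gf (hunion E1 E2) = matching_gf E1 * matching_gf E2.
Proof.
move=> E20; rewrite /hunion setUC matching_gf_mulU ?notin_set0_imset //; last first.
  move=> _ _ /imsetP[b _ ->] /imsetP[a _ ->]; rewrite -setI_eq0; apply/eqP/setP => x.
  by rewrite !inE; apply/negbTE/andP => -[/imsetP[y _ ->] /imsetP[z _]].
by rewrite mulrC (matching_gf_imset _ inl_inj) (matching_gf_imset _ inr_inj).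
Qed.

Lemma matching_gf_hfamily (k : nat) (V : finType) (F : 'I_k -> {set {set V}}) :
  (forall i, set0 \notin F i) -> matching_gf (hfamily F) = \prod_(i < k) matching_gf (F i).
Proof.
move=> F0; rewrite matching_gf_bigcup => [|i|i j ij _ _ /imsetP[a _ ->] /imsetP[b _ ->]].
- by apply: eq_bigr => i _; rewrite matching_gf_imset // => x y [].
- exact: notin_set0_imset.
rewrite -setI_eq0; apply/eqP/setP => x; rewrite !inE.
by apply/andP => -[/imsetP[y _ ->] /imsetP[z _ [/eqP]]]; rewrite (negbTE ij).
Qed.

Lemma matching_gf_hcopies (k : nat) (V : finType) (E : {set {set V}}) :
  set0 \notin E -> matching_gf (hcopies k E) = matching_gf E ^+ k.
Proof.
by move=> E0; rewrite (matching_gf_hfamily (F := fun _ => E)) // prodr_const card_ord.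
Qed.

Lemma hdeleteU (V : finType) (A B : {set {set V}}) (X : {set V}) :
  hdelete (A :|: B) X = hdelete A X :|: hdelete B X.
Proof. by apply/setP => e; rewrite !inE andb_orl. Qed.

Lemma hdelete_imset (V W : finType) (f : V -> W) (E : {set {set V}}) (X : {set W}) :
  hdelete [set f @: e | e : {set V} in E] X =
  [set f @: e | e : {set V} in hdelete E (f @^-1: X)].
Proof.
have disj_pre (e : {set V}) : [disjoint f @: e & X] = [disjoint e & f @^-1: X].
  by rewrite !disjoints_subset sub_imset_pre preimsetC.
apply/setP => y; rewrite inE; apply/andP/imsetP => [[/imsetP[e eE ->]]|[e]].
  by exists e; rewrite // inE eE -disj_pre.
by rewrite inE => /andP[eE disj] ->; rewrite imset_f // disj_pre.
Qed.

Lemma hdelete_hunion (V1 V2 : finType) (E1 : {set {set V1}}) (E2 : {set {set V2}})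
    (X : {set (V1 + V2)%type}) :
  hdelete (hunion E1 E2) X = hunion (hdelete E1 (inl @^-1: X)) (hdelete E2 (inr @^-1: X)).
Proof. by rewrite /hunion hdeleteU !hdelete_imset. Qed.

Lemma hdelete_hfamily (k : nat) (V : finType) (F : 'I_k -> {set {set V}})
    (X : {set ('I_k * V)%type}) :
  hdelete (hfamily F) X = hfamily (fun j => hdelete (F j) (pair j @^-1: X)).
Proof.
have hdelete0X : hdelete set0 X = set0 by apply/setP => e; rewrite !inE.
rewrite /hfamily (big_morph (fun E => hdelete E X) (fun A B => hdeleteU A B X) hdelete0X).
by apply: eq_bigr => i _; rewrite hdelete_imset.
Qed.

Section Attach.
Variables (r m : nat) (VG VH : finType) (EG : {set {set VG}}) (u : VG)
  (EH : {set {set VH}}) (v : VH).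
Hypotheses (EG0 : set0 \notin EG) (EH0 : set0 \notin EH).

Local Notation vertex := ((VG + ('I_m * VH)) + ('I_m * 'I_(r - 2)))%type.

Definition pendant_edge (i : 'I_m) : {set vertex} :=
  [set inl (inl u)] :|: [set inl (inr (i, v))] :|: [set inr (i, j) | j : 'I_(r - 2)].

Let base : {set {set vertex}} :=
  [set inl @: e | e : {set (VG + ('I_m * VH))%type} in hunion EG (hcopies m EH)].

Lemma inl_pendant_edge i x :
  (inl x \in pendant_edge i) = (x == inl u) || (x == inr (i, v)).
Proof.
by rewrite !inE !(inj_eq inl_inj); case: imsetP => [[] //|_]; rewrite orbF.
Qed.

Lemma matching_gf_hdelete_pendant i :
  matching_gf (hdelete base (pendant_edge i)) =
  matching_gf (hdelete EG [set u]) * matching_gf (hdelete EH [set v]) *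
  matching_gf EH ^+ m.-1.
Proof.
have pre_u : inl @^-1: (inl @^-1: pendant_edge i) = [set u].
  by apply/setP => x; rewrite in_set1 2!in_set inl_pendant_edge orbF.
have pre_v j : pair j @^-1: (inr @^-1: (inl @^-1: pendant_edge i)) =
               if j == i then [set v] else set0.
  apply/setP => y; rewrite 3!in_set inl_pendant_edge /= (inj_eq inr_inj) xpair_eqE.
  by case: eqP; rewrite inE.
rewrite hdelete_imset matching_gf_imset; last exact: inl_inj.
rewrite hdelete_hunion pre_u matching_gf_hunion -?mulrA; last first.
  by apply: notin_set0_hdelete; apply: notin_set0_hfamily.
congr (_ * _); rewrite hdelete_hfamily matching_gf_hfamily => [|j]; last first.
  exact: notin_set0_hdelete.
rewrite (bigD1 i) //= pre_v eqxx; congr (_ * _).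
rewrite (eq_bigr (fun _ => matching_gf EH)) => [|j ji]; last first.
  by rewrite pre_v (negbTE ji) hdelete_set0.
by rewrite prodr_const cardC1 card_ord.
Qed.

Lemma matching_gf_attach :
  matching_gf (attach r m EG u EH v) =
  matching_gf EG * matching_gf EH ^+ m +
  m%:R * 'X * (matching_gf (hdelete EG [set u]) * matching_gf (hdelete EH [set v])
               * matching_gf EH ^+ m.-1).
Proof.
have u_in i : inl (inl u) \in pendant_edge i by rewrite inl_pendant_edge eqxx.
have v_in i : inl (inr (i, v)) \in pendant_edge i by rewrite inl_pendant_edge eqxx orbT.
rewrite [attach _ _ _ _ _ _]/(base :|: [set pendant_edge i | i : 'I_m]).
rewrite matching_gf_star; first last.
- move=> _ _ /imsetP[i _ ->] /imsetP[j _ ->]; rewrite -setI_eq0.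
  by apply/set0Pn; exists (inl (inl u)); rewrite inE !u_in.
- apply/setP => e; rewrite in_setI in_set0.
  apply/negbTE/andP => -[/imsetP[g gE ->] /imsetP[i _ gi]].
  have := u_in i; have := v_in i; rewrite -gi !(mem_imset _ _ inl_inj).
  by case/setUP: gE => /imsetP[h _ ->] => [/imsetP[] | _ /imsetP[]].
rewrite /base matching_gf_imset; last exact: inl_inj.
rewrite matching_gf_hunion ?matching_gf_hcopies ?notin_set0_hfamily //; congr (_ + _).
rewrite big_imset => [|i j _ _ eq_ij] /=; last first.
  by have := v_in i; rewrite eq_ij inl_pendant_edge /= => /eqP[].
under eq_bigr do rewrite matching_gf_hdelete_pendant.
by rewrite sumr_const card_ord mulr_natl mulrnAl.
Qed.

End Attach.

Lemma uniform_notin_set0 (V : finType) (r : nat) (E : {set {set V}}) :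
  (0 < r)%N -> uniform r E -> set0 \notin E.
Proof.
by move=> r_gt0 unifE; apply/negP => /unifE; rewrite cards0 => r0; rewrite -r0 in r_gt0.
Qed.

Theorem lemma9 (r : nat) (VG VH : finType)
  (EG : {set {set VG}}) (EH : {set {set VH}}) (u : VG) (v : VH) (m : nat) :
  (2 <= r)%N -> uniform r EG -> uniform r EH -> (0 < m)%N ->
  matchpoly r (hunion (attach r m EG u EH v) (hcopies m.-1 EG)) =
  matchpoly r (hunion (attach r m EH v EG u) (hcopies m.-1 EH)).
Proof.
move=> r_ge2 unifG unifH m_gt0.
have r_gt0 : (0 < r)%N by apply: leq_trans r_ge2.
have EG0 := uniform_notin_set0 r_gt0 unifG; have EH0 := uniform_notin_set0 r_gt0 unifH.
case: m m_gt0 => // m _; apply: matchpoly_eq.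
  by rewrite !card_sum !card_prod !card_ord !mulSn; lia.
rewrite !matching_gf_hunion ?notin_set0_hfamily //.
rewrite !matching_gf_attach // !matching_gf_hcopies //=.
by rewrite !exprS; ring.
Qed.
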